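(* Let $\mathcal L:\mathbb F^{q\times q}\to\mathbb F^{n\times n}$ be $*$-linear with Choi matrix $\mathbb L$ and matricization $L=[L_{ij}]$, and set $m=\operatorname{rank}\mathbb L$. Let $L_1,\ldots,L_m$ and $L_1',\ldots,L_m'$ in $\mathbb F^{n\times q}$ both span $\operatorname{span}\{L_{ij}:1\le i\le n,1\le j\le q\}$. Let $A_1,\ldots,A_m$, $\mathbb H$ be obtained from $L_1,\ldots,L_m$ by the construction below, and $A_1',\ldots,A_m'$, $\mathbb H'$ likewise from $L_1',\ldots,L_m'$. Then there is an invertible $\Phi\in\mathbb F^{m\times m}$ with $$\begin{bmatrix}L_1\\ \vdots\\ L_m\end{bmatrix}=(\Phi\otimes I_n)\begin{bmatrix}L_1'\\ \vdots\\ L_m'\end{bmatrix},\qquad (\Phi^*\otimes I_n)\begin{bmatrix}A_1\\ \vdots\\ A_m\end{bmatrix}=\begin{bmatrix}A_1'\\ \vdots\\ A_m'\end{bmatrix},\qquad \mathbb H=\Phi\mathbb H'\Phi^*.$$ In fact one may take $\Phi=[\vec{\mathbf 1}_n^*(B_k\circ\overline{A_l'})\vec{\mathbf 1}_q]_{k,l=1}^m$.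
   Context: $\mathbb F\in\{\mathbb R,\mathbb C\}$; $\otimes$ is the Kronecker product, $\circ$ the Hadamard product, $\vec{\mathbf 1}_p$ the all-ones vector. For $T\in\mathbb F^{r\times s}$, $\operatorname{vec}_{r\times s}(T)$ is column-stacking vectorization. For linear $\mathcal L:\mathbb F^{q\times q}\to\mathbb F^{n\times n}$: matricization $L\in\mathbb F^{n^2\times q^2}$ with $L\operatorname{vec}(V)=\operatorname{vec}(\mathcal L(V))$, written as $L=[L_{ij}]$, $1\le i\le n$, $1\le j\le q$, blocks $L_{ij}\in\mathbb F^{n\times q}$; Choi matrix $\mathbb L=[\mathcal L(\mathcal E^{(q)}_{ij})]_{i,j=1}^q$ where $\mathcal E^{(q)}_{ij}$ are standard basis matrices. $*$-linear means $\mathcal L(V^* )=\mathcal L(V)^*$. Construction: given $L_1,\ldots,L_m$ spanning $\operatorname{span}\{L_{ij}\}$ ($m=\operatorname{rank}\mathbb L$), let $L_{ij}=\sum_k\alpha^{ij}_kL_k$ (unique scalars) and $L_k=\sum_{i,j}\beta^k_{ij}L_{ij}$ (any choice); $A_k$ has $(i,j)$ entry $\overline{\alpha^{ij}_k}$, $B_k$ has $(i,j)$ entry $\beta^k_{ij}$, and $\mathbb H=[\vec{\mathbf 1}_n^*(B_k\circ\overline{L_l})\vec{\mathbf 1}_q]_{k,l=1}^m$. Analogously $\alpha'^{ij}_k,\beta'^k_{ij},A_k',B_k',\mathbb H'$ for $L_1',\ldots,L_m'$. *)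

From HB Require Import structures.
From mathcomp Require Import all_boot all_order all_algebra.
From mathcomp Require Import mxtens.
Set Implicit Arguments. Unset Strict Implicit. Unset Printing Implicit Defensive.
Import Order.TTheory GRing.Theory Num.Theory.
Local Open Scope ring_scope.

(* Throughout, [cj : F -> F] is the conjugation of the scalar field:
   the identity for F = R, complex conjugation for F = C. *)

Definition cadj (F : fieldType) (cj : F -> F) r s (A : 'M[F]_(r, s)) : 'M[F]_(s, r) :=
  map_mx cj A^T.

Definition cbar (F : fieldType) (cj : F -> F) r s (A : 'M[F]_(r, s)) : 'M[F]_(r, s) :=
  map_mx cj A.

Definition star_linear (F : fieldType) (cj : F -> F) q n
  (L : 'M[F]_q -> 'M[F]_n) : Prop :=
  forall V : 'M[F]_q, L (cadj cj V) = cadj cj (L V).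

(* column-stacking vectorization vec_{r x s}(T) : index  c*r + a  <-> entry T a c *)
Definition cvec (F : fieldType) r s (T : 'M[F]_(r, s)) : 'cV[F]_(s * r) :=
  \col_k T (mxtens_unindex k).2 (mxtens_unindex k).1.

Definition is_matricization (F : fieldType) q n (L : 'M[F]_q -> 'M[F]_n)
  (M : 'M[F]_(n * n, q * q)) : Prop :=
  forall V : 'M[F]_q, M *m cvec V = cvec (L V).

Definition mblock (F : fieldType) q n (M : 'M[F]_(n * n, q * q)) (i : 'I_n) (j : 'I_q)
  : 'M[F]_(n, q) :=
  \matrix_(a < n, b < q) M (mxtens_index (i, a)) (mxtens_index (j, b)).

Definition choi (F : fieldType) q n (L : 'M[F]_q -> 'M[F]_n) : 'M[F]_(q * n, q * n) :=
  \matrix_(r, c) L (delta_mx (mxtens_unindex r).1 (mxtens_unindex c).1)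
                   (mxtens_unindex r).2 (mxtens_unindex c).2.

Definition stack (F : fieldType) m n q (X : 'I_m -> 'M[F]_(n, q)) : 'M[F]_(m * n, q) :=
  \matrix_(r, c) X (mxtens_unindex r).1 (mxtens_unindex r).2 c.

Definition hadamard (F : fieldType) r s (A B : 'M[F]_(r, s)) : 'M[F]_(r, s) :=
  map2_mx *%R A B.

Definition ones (F : fieldType) r : 'cV[F]_r := const_mx 1.

Definition sandwich (F : fieldType) (cj : F -> F) r s (A : 'M[F]_(r, s)) : F :=
  (cadj cj (ones F r) *m A *m ones F s) ord0 ord0.

Definition Amat (F : fieldType) (cj : F -> F) n q m
  (alpha : 'I_n -> 'I_q -> 'I_m -> F) (k : 'I_m) : 'M[F]_(n, q) :=
  \matrix_(i, j) cj (alpha i j k).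

Definition Bmat (F : fieldType) n q m
  (beta : 'I_m -> 'I_n -> 'I_q -> F) (k : 'I_m) : 'M[F]_(n, q) :=
  \matrix_(i, j) beta k i j.

Definition Hmat (F : fieldType) (cj : F -> F) n q m
  (beta : 'I_m -> 'I_n -> 'I_q -> F) (Ls : 'I_m -> 'M[F]_(n, q)) : 'M[F]_m :=
  \matrix_(k, l) sandwich cj (hadamard (Bmat beta k) (cbar cj (Ls l))).

Definition Phimat (F : fieldType) (cj : F -> F) n q m
  (beta : 'I_m -> 'I_n -> 'I_q -> F) (alpha' : 'I_n -> 'I_q -> 'I_m -> F) : 'M[F]_m :=
  \matrix_(k, l) sandwich cj (hadamard (Bmat beta k) (cbar cj (Amat cj alpha' l))).

Definition theorem1p2_over (F : fieldType) (cj : F -> F) : Prop :=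
  forall (q n : nat) (L : {linear 'M[F]_q -> 'M[F]_n}) (Lmat : 'M[F]_(n * n, q * q)),
  is_matricization L Lmat ->
  star_linear cj L ->
  forall m : nat, m = \rank (choi L) ->
  forall (Ls Ls' : 'I_m -> 'M[F]_(n, q)),
  (<<[seq Ls k | k <- enum 'I_m]>> =
     <<[seq mblock Lmat i j | i <- enum 'I_n, j <- enum 'I_q]>>)%VS ->
  (<<[seq Ls' k | k <- enum 'I_m]>> =
     <<[seq mblock Lmat i j | i <- enum 'I_n, j <- enum 'I_q]>>)%VS ->
  forall (alpha alpha' : 'I_n -> 'I_q -> 'I_m -> F)
         (beta beta' : 'I_m -> 'I_n -> 'I_q -> F),
  (forall i j, mblock Lmat i j = \sum_(k < m) alpha i j k *: Ls k) ->
  (forall k, Ls k = \sum_(i < n) \sum_(j < q) beta k i j *: mblock Lmat i j) ->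
  (forall i j, mblock Lmat i j = \sum_(k < m) alpha' i j k *: Ls' k) ->
  (forall k, Ls' k = \sum_(i < n) \sum_(j < q) beta' k i j *: mblock Lmat i j) ->
  let Phi := Phimat cj beta alpha' in
  [/\ Phi \in unitmx,
      stack Ls = (Phi *t 1%:M) *m stack Ls',
      (cadj cj Phi *t 1%:M) *m stack (Amat cj alpha) = stack (Amat cj alpha') &
      Hmat cj beta Ls = Phi *m Hmat cj beta' Ls' *m cadj cj Phi].

From HB Require Import structures.
From mathcomp Require Import all_boot all_order all_algebra.
From mathcomp Require Import mxtens.
Import GRing.Theory Num.Theory.
Local Open Scope ring_scope.
Set Implicit Arguments. Unset Strict Implicit.

(* We work over any field F whose conjugation cj is an involutive ring morphism;
   R with the identity and C with complex conjugation are the two instances.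
   1. Rank: the transposed Choi matrix factors as (coefficients of the L_ij in a
      generating family L_1..L_m) times (the flattened L_k); since its rank is m,
      every generating family of m matrices is free, so coefficients are unique.
   2. Change of generators: writing L_k = sum_ij beta^k_ij L_ij and substituting
      L_ij = sum_l alpha'^ij_l L'_l gives L_k = sum_l Phi_kl L'_l with the announced
      Phi; the reverse substitution gives Psi, and uniqueness forces Phi Psi = 1.
      Uniqueness also gives alpha' = alpha Phi, whence the relation on the A_k.
   3. *-linearity makes the blocks Hermitian, conj((L_ij)_ab) = (L_ab)_ij, hence the
      pairing identity sum_ij g_ij conj((sum_ab d_ab L_ab)_ij)
                    = sum_ab conj(d_ab) (sum_ij g_ij L_ij)_ab.
      It shows that H = [sum_ij B_k o conj(L_l)] is linear in the family L_k on the
      left and (by definition) conjugate-linear on the right, so H = Phi H' Phi^*. *)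

Lemma sum_tens (R : nmodType) m n (G : 'I_(m * n) -> R) :
  \sum_(s < m * n) G s = \sum_(i < m) \sum_(j < n) G (mxtens_index (i, j)).
Proof.
rewrite pair_big (reindex (@mxtens_index m n)) //=.
  by apply: eq_bigr => -[].
by exists (@mxtens_unindex m n) => x _; rewrite (mxtens_indexK, mxtens_unindexK).
Qed.

Lemma comb_trans (R : pzRingType) (V : lmodType R) (J K : finType)
    (x : V) (y : J -> V) (z : K -> V) (c : J -> R) (d : J -> K -> R) :
  x = \sum_j c j *: y j -> (forall j, y j = \sum_k d j k *: z k) ->
  x = \sum_k (\sum_j c j * d j k) *: z k.
Proof.
move=> -> yE; under eq_bigr do rewrite yE scaler_sumr.
rewrite exchange_big; apply: eq_bigr => k _; rewrite scaler_suml.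
by apply: eq_bigr => j _; rewrite scalerA.
Qed.

Lemma comb_id (R : pzRingType) (V : lmodType R) m (x : 'I_m -> V) k :
  x k = \sum_r (1%:M : 'M[R]_m) k r *: x r.
Proof.
rewrite (bigD1 k) //= mxE eqxx scale1r big1 ?addr0 // => r /negPf.
by rewrite mxE eq_sym => ->; rewrite scale0r.
Qed.

Lemma comb_inverse (R : pzRingType) (V : lmodType R) m (x y : 'I_m -> V) (P Q : 'M[R]_m) :
  (forall c d : 'I_m -> R, \sum_k c k *: x k = \sum_k d k *: x k -> c =1 d) ->
  (forall k, x k = \sum_l P k l *: y l) -> (forall l, y l = \sum_r Q l r *: x r) ->
  P *m Q = 1%:M.
Proof.
move=> xfree xE yE; apply/matrixP => k r; move: r; apply: xfree.
rewrite -comb_id (comb_trans (xE k) yE).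
by apply: eq_bigr => r _; rewrite mxE.
Qed.

Lemma stack_comb (F : fieldType) m n p (X Y : 'I_m -> 'M[F]_(n, p)) (P : 'M[F]_m) :
  (forall k, X k = \sum_l P k l *: Y l) -> stack X = (P *t 1%:M) *m stack Y.
Proof.
move=> XE; apply/matrixP => r c; rewrite -[r](@mxtens_unindexK m n).
case: (mxtens_unindex r) => k a; rewrite !mxE mxtens_indexK XE summxE sum_tens.
apply: eq_bigr => l _; rewrite (bigD1 a) //= big1 => [|a' /negPf na].
  by rewrite !mxE !mxtens_indexK eqxx mulr1 addr0.
by rewrite !mxE !mxtens_indexK eq_sym na mulr0 mul0r.
Qed.

Section FreeFamily.
Variables (F : fieldType) (n q m : nat).

(* The matrix whose k-th row is X k flattened, entry (a, b) at tensor index (b, a),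
   which is the layout of the Choi matrix. *)
Definition famrows (X : 'I_m -> 'M[F]_(n, q)) : 'M[F]_(m, q * n) :=
  \matrix_(k, s) X k (mxtens_unindex s).2 (mxtens_unindex s).1.

Lemma famrows_comb (X : 'I_m -> 'M[F]_(n, q)) (c : 'I_m -> F) s :
  (\row_k c k *m famrows X) 0 s =
  (\sum_k c k *: X k) (mxtens_unindex s).2 (mxtens_unindex s).1.
Proof. by rewrite !mxE summxE; apply: eq_bigr => k _; rewrite !mxE. Qed.

Lemma comb_unique p (X : 'I_m -> 'M[F]_(n, q)) (A : 'M[F]_(p, m)) :
  \rank (A *m famrows X) = m ->
  forall c d : 'I_m -> F, \sum_k c k *: X k = \sum_k d k *: X k -> c =1 d.
Proof.
move=> rkm c d cd k.
have Xfree : row_free (famrows X).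
  by rewrite /row_free eqn_leq rank_leq_row -{1}rkm mxrankM_maxr.
suff /rowP/(_ k) : \row_k c k = \row_k d k :> 'rV_m by rewrite !mxE.
by apply: (row_free_inj Xfree); apply/rowP => s; rewrite !famrows_comb cd.
Qed.

End FreeFamily.

Section Blocks.
Variables (F : fieldType) (q n : nat) (L : 'M[F]_q -> 'M[F]_n).
Variable Lmat : 'M[F]_(n * n, q * q).
Hypothesis LmatE : is_matricization L Lmat.

Lemma mblockE i j a b : mblock Lmat i j a b = L (delta_mx b j) a i.
Proof.
have := congr1 (fun v : 'cV_(n * n) => v (mxtens_index (i, a)) 0) (LmatE (delta_mx b j)).
rewrite /= [RHS]mxE mxtens_indexK /= => <-; rewrite !mxE sum_tens (bigD1 j) //=.
rewrite (bigD1 b) //= big1 => [|b' /negPf nb]; last first.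
  by rewrite !mxE mxtens_indexK /= nb mulr0.
rewrite big1 => [|j' /negPf nj]; last first.
  by apply: big1 => b' _; rewrite !mxE mxtens_indexK /= nj andbF mulr0.
by rewrite !mxE mxtens_indexK /= !eqxx mulr1 !addr0.
Qed.

(* The coefficients alpha^ij_k arranged with rows indexed like the Choi matrix. *)
Definition coefmx m (alpha : 'I_n -> 'I_q -> 'I_m -> F) : 'M[F]_(q * n, m) :=
  \matrix_(r, k) alpha (mxtens_unindex r).2 (mxtens_unindex r).1 k.

Lemma choi_factor m (Ls : 'I_m -> 'M[F]_(n, q)) (alpha : 'I_n -> 'I_q -> 'I_m -> F) :
  (forall i j, mblock Lmat i j = \sum_k alpha i j k *: Ls k) ->
  (choi L)^T = coefmx alpha *m famrows Ls.
Proof.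
move=> HA; apply/matrixP => r s.
rewrite !mxE -[in LHS]mblockE HA summxE.
by apply: eq_bigr => k _; rewrite !mxE.
Qed.

Definition bcomb (g : 'I_n -> 'I_q -> F) : 'M[F]_(n, q) :=
  \sum_i \sum_j g i j *: mblock Lmat i j.

Lemma bcombE g a b : bcomb g a b = \sum_i \sum_j g i j * mblock Lmat i j a b.
Proof.
rewrite summxE; apply: eq_bigr => i _; rewrite summxE.
by apply: eq_bigr => j _; rewrite mxE.
Qed.

Lemma bcomb_comb m (Y : 'I_m -> 'M[F]_(n, q)) (alpha : 'I_n -> 'I_q -> 'I_m -> F) g :
  (forall i j, mblock Lmat i j = \sum_l alpha i j l *: Y l) ->
  bcomb g = \sum_l (\sum_i \sum_j g i j * alpha i j l) *: Y l.
Proof.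
move=> HA; have gE : bcomb g = \sum_(p : 'I_n * 'I_q) g p.1 p.2 *: mblock Lmat p.1 p.2.
  by rewrite /bcomb pair_big.
rewrite (comb_trans gE (fun p => HA p.1 p.2)).
by apply: eq_bigr => l _; rewrite pair_big.
Qed.

Lemma blocks_free m (X : 'I_m -> 'M[F]_(n, q)) (alpha : 'I_n -> 'I_q -> 'I_m -> F) :
  m = \rank (choi L) ->
  (forall i j, mblock Lmat i j = \sum_k alpha i j k *: X k) ->
  forall c d : 'I_m -> F, \sum_k c k *: X k = \sum_k d k *: X k -> c =1 d.
Proof.
move=> rkm HX; apply: (comb_unique (A := coefmx alpha)).
by rewrite -(choi_factor HX) mxrank_tr.
Qed.

End Blocks.

Section Conjugation.
Variables (F : fieldType) (cj : {rmorphism F -> F}).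
Hypothesis cjK : involutive cj.

Lemma sandwichE r s (A : 'M[F]_(r, s)) : sandwich cj A = \sum_i \sum_j A i j.
Proof.
rewrite /sandwich !mxE exchange_big; apply: eq_bigr => j _.
rewrite !mxE mulr1; apply: eq_bigr => i _.
by rewrite !mxE rmorph1 mul1r.
Qed.

Lemma cadj_delta p (b j : 'I_p) : cadj cj (delta_mx b j) = delta_mx j b.
Proof.
apply/matrixP => x y; rewrite !mxE.
by case: (x == j); case: (y == b); rewrite /= ?rmorph0 ?rmorph1.
Qed.

Section Hmatrix.
Variables (n q m : nat) (beta : 'I_m -> 'I_n -> 'I_q -> F).

Lemma HmatE (X : 'I_m -> 'M[F]_(n, q)) k l :
  Hmat cj beta X k l = \sum_i \sum_j beta k i j * cj (X l i j).
Proof. by rewrite mxE sandwichE; apply: eq_bigr => i _; apply: eq_bigr => j _; rewrite !mxE. Qed.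

Lemma Hmat_combr (X Y : 'I_m -> 'M[F]_(n, q)) (P : 'M[F]_m) :
  (forall l, X l = \sum_l' P l l' *: Y l') ->
  Hmat cj beta X = Hmat cj beta Y *m cadj cj P.
Proof.
move=> XE; apply/matrixP => k l; rewrite HmatE mxE.
have termE i j : beta k i j * cj (X l i j) =
    \sum_l' beta k i j * cj (Y l' i j) * cadj cj P l' l.
  rewrite XE summxE rmorph_sum mulr_sumr; apply: eq_bigr => l' _.
  by rewrite !mxE rmorphM mulrA mulrAC.
under eq_bigr do under eq_bigr do rewrite termE.
under eq_bigr do rewrite exchange_big.
rewrite exchange_big; apply: eq_bigr => l' _; rewrite HmatE mulr_suml.
by apply: eq_bigr => i _; rewrite mulr_suml.
Qed.

Lemma PhimatE (alpha' : 'I_n -> 'I_q -> 'I_m -> F) k l :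
  Phimat cj beta alpha' k l = \sum_i \sum_j beta k i j * alpha' i j l.
Proof.
rewrite mxE sandwichE; apply: eq_bigr => i _; apply: eq_bigr => j _.
by rewrite !mxE cjK.
Qed.

End Hmatrix.

Lemma Amat_comb n q m (alpha alpha' : 'I_n -> 'I_q -> 'I_m -> F) (P : 'M[F]_m) :
  (forall i j l, alpha' i j l = \sum_k alpha i j k * P k l) ->
  forall l, Amat cj alpha' l = \sum_k cadj cj P l k *: Amat cj alpha k.
Proof.
move=> alpha'E l; apply/matrixP => i j; rewrite summxE !mxE alpha'E rmorph_sum.
by apply: eq_bigr => k _; rewrite !mxE rmorphM mulrC.
Qed.

Section StarLinear.
Variables (q n : nat) (L : 'M[F]_q -> 'M[F]_n) (Lmat : 'M[F]_(n * n, q * q)).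
Hypotheses (LmatE : is_matricization L Lmat) (Lstar : star_linear cj L).

Lemma mblock_sym i j a b : cj (mblock Lmat i j a b) = mblock Lmat a b i j.
Proof. by rewrite !(mblockE LmatE) -[delta_mx j b]cadj_delta Lstar !mxE. Qed.

Lemma bcomb_pairing (g d : 'I_n -> 'I_q -> F) :
  \sum_i \sum_j g i j * cj (bcomb Lmat d i j) = \sum_a \sum_b cj (d a b) * bcomb Lmat g a b.
Proof.
have expand i j : g i j * cj (bcomb Lmat d i j) =
    \sum_a \sum_b cj (d a b) * (g i j * mblock Lmat i j a b).
  rewrite bcombE rmorph_sum mulr_sumr; apply: eq_bigr => a _.
  rewrite rmorph_sum mulr_sumr; apply: eq_bigr => b _.
  by rewrite rmorphM mblock_sym mulrCA.
under eq_bigr do under eq_bigr do rewrite expand.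
under eq_bigr do rewrite exchange_big.
rewrite exchange_big; apply: eq_bigr => a _.
under eq_bigr do rewrite exchange_big.
rewrite exchange_big; apply: eq_bigr => b _.
by rewrite bcombE mulr_sumr; apply: eq_bigr => i _; rewrite mulr_sumr.
Qed.

Lemma Hmat_pairing m (beta gamma : 'I_m -> 'I_n -> 'I_q -> F) (Y : 'I_m -> 'M[F]_(n, q)) k l :
  (forall l, Y l = bcomb Lmat (gamma l)) ->
  Hmat cj beta Y k l = \sum_a \sum_b cj (gamma l a b) * bcomb Lmat (beta k) a b.
Proof. by move=> YE; rewrite HmatE YE bcomb_pairing. Qed.

Lemma Hmat_combl m (beta beta' gamma : 'I_m -> 'I_n -> 'I_q -> F)
    (X X' Y : 'I_m -> 'M[F]_(n, q)) (P : 'M[F]_m) :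
  (forall k, X k = bcomb Lmat (beta k)) -> (forall k, X' k = bcomb Lmat (beta' k)) ->
  (forall l, Y l = bcomb Lmat (gamma l)) -> (forall k, X k = \sum_k' P k k' *: X' k') ->
  Hmat cj beta Y = P *m Hmat cj beta' Y.
Proof.
move=> XE X'E YE XP; apply/matrixP => k l; rewrite (Hmat_pairing _ _ _ YE) !mxE.
under [RHS]eq_bigr do rewrite (Hmat_pairing _ _ _ YE) mulr_sumr.
rewrite [RHS]exchange_big; apply: eq_bigr => a _.
under [RHS]eq_bigr do rewrite mulr_sumr.
rewrite [RHS]exchange_big; apply: eq_bigr => b _.
rewrite -XE XP summxE mulr_sumr; apply: eq_bigr => k' _.
by rewrite mxE -X'E mulrCA.
Qed.

End StarLinear.
End Conjugation.

Lemma theorem1p2_rmorph (F : fieldType) (cj : {rmorphism F -> F}) :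
  involutive cj -> theorem1p2_over cj.
Proof.
move=> cjK q n L Lmat LmatE Lstar m rkm Ls Ls' _ _ alpha alpha' beta beta' HA HB HA' HB' Phi.
have free := blocks_free LmatE rkm.
have LsE k : Ls k = bcomb Lmat (beta k) := HB k.
have Ls'E k : Ls' k = bcomb Lmat (beta' k) := HB' k.
have LsPhi k : Ls k = \sum_l Phi k l *: Ls' l.
  by rewrite LsE (bcomb_comb _ HA'); apply: eq_bigr => l _; rewrite PhimatE.
pose Psi : 'M[F]_m := \matrix_(k, l) \sum_i \sum_j beta' k i j * alpha i j l.
have Ls'Psi k : Ls' k = \sum_l Psi k l *: Ls l.
  by rewrite Ls'E (bcomb_comb _ HA); apply: eq_bigr => l _; rewrite mxE.
have alpha'E i j l : alpha' i j l = \sum_k alpha i j k * Phi k l.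
  move: l; apply: (free _ _ HA'); rewrite -HA'.
  exact: comb_trans (HA i j) LsPhi.
split.
- by case: (mulmx1_unit (comb_inverse (free _ _ HA) LsPhi Ls'Psi)).
- exact: stack_comb LsPhi.
- by rewrite -(stack_comb (Amat_comb cj alpha'E)).
- by rewrite (Hmat_combr cj beta LsPhi) (Hmat_combl LmatE Lstar LsE Ls'E Ls'E LsPhi).
Qed.

Theorem theorem1p2 :
  (forall R : realFieldType, theorem1p2_over (@id R)) /\
  (forall C : numClosedFieldType, theorem1p2_over (fun z : C => z^*)).
Proof.
split=> [R | C]; first exact: (@theorem1p2_rmorph R idfun).
exact: (@theorem1p2_rmorph C Num.conj conjCK).
Qed.
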